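(* Consider the network model and the NSB algorithm described in the context, in the setting without packet arrivals (no exogenous arrivals after time 0). For every graph $G$ and every finite collection of initial packets, the evacuation time of NSB (under any tie-breaking rule) is at most $\frac{3}{2}$ times the minimum evacuation time. That is, NSB has an approximation ratio no greater than $3/2$ for the evacuation time.
   Context: Network model. $G=(V,E)$ is a finite undirected graph with $n=|V|$ nodes and $m=|E|$ links; $L(i)$ denotes the set of links incident to node $i$. Time is slotted, $k=0,1,2,\dots$. Each link $l$ has a queue; $Q_l(k)$ is the number of packets waiting at link $l$ in time-slot $k$ (including packets arriving in slot $k$), and the workload (queue length) of node $i$ is $Q_i(k)=\sum_{l\in L(i)}Q_l(k)$. A schedule in a slot is a matching of $G$ (a set of links no two of which share an endpoint; one-hop interference model); only links with $Q_l(k)>0$ may be scheduled; each scheduled link transmits exactly one packet, which then leaves the system (single-hop traffic, unit link capacities). NSB algorithm. Time-slots are grouped into frames: frame $k'$ consists of slots $3k',3k'+1,3k'+2$. Let $R_i(k)=1$ if node $i$ is an endpoint of a link scheduled in slot $k$ and $R_i(k)=0$ otherwise (with $R_i(k)=0$ for $k<0$). Define $U_i(k)=R_i(k-1)R_i(k-2)$ if $k=3k'+2$ for some integer $k'$, and $U_i(k)=R_i(k-1)$ otherwise. Let $\Delta(k)=\max_{i\in V}Q_i(k)$. Node $i$ is heavy in slot $k$ if $Q_i(k)\ge \frac{n-1}{n}\Delta(k)$. In each slot $k$, NSB assigns node weights $w_i(k)=Q_i(k)(2-U_i(k))$ if $i$ is heavy and $w_i(k)=Q_i(k)$ otherwise;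 it excludes links with $Q_l(k)=0$, and chooses, among matchings $M$ of the remaining links, one maximizing $w(M)=\sum_{i:\,M\cap L(i)\neq\emptyset}w_i(k)$ (a maximum vertex-weighted matching, ties broken arbitrarily); one packet is transmitted on each link of the chosen matching. Evacuation time. Given finitely many initial packets and no further arrivals, the evacuation time of a scheduling algorithm is the number of time-slots it needs to transmit all the initial packets; the minimum evacuation time $\mathcal{X}'$ is the minimum of this over all feasible scheduling algorithms. An algorithm has approximation ratio $\eta$ if its evacuation time is at most $\eta\,\mathcal{X}'$ for every network graph and every finite set of initial packets. *)

From mathcomp Require Import all_boot all_order.
Set Implicit Arguments. Unset Strict Implicit. Unset Printing Implicit Defensive.

(* A network: node set V (a finType), link set E : {set {set V}} whose elements
   are 2-element subsets of V (simple undirected graph). *)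

Section Net.
Variables (V : finType) (E : {set {set V}}) (Q0 : {set V} -> nat).

Fixpoint qlen (S : nat -> {set {set V}}) (k : nat) (l : {set V}) : nat :=
  match k with
  | 0 => Q0 l
  | k'.+1 => qlen S k' l - (l \in S k')
  end.

Definition qnode S k (i : V) : nat := \sum_(l in E | i \in l) qlen S k l.

(* One-hop interference: a matching of G. *)
Definition matching (M : {set {set V}}) : Prop :=
  M \subset E /\
  forall l1 l2, l1 \in M -> l2 \in M -> l1 != l2 -> [disjoint l1 & l2].

Definition admissible S k (M : {set {set V}}) : Prop :=
  matching M /\ forall l, l \in M -> 0 < qlen S k l.

Definition feasible S : Prop := forall k, admissible S k (S k).

Definition Rn (S : nat -> {set {set V}}) (k : nat) (i : V) : nat := [exists l in S k, i \in (l : {set V})].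
(* R_i(k - d), with R_i(k) = 0 for k < 0 *)
Definition Rback S k d (i : V) : nat := if d <= k then Rn S (k - d) i else 0.
Definition Un S k (i : V) : nat :=
  if k %% 3 == 2 then Rback S k 1 i * Rback S k 2 i else Rback S k 1 i.

Definition Delta S k : nat := \max_(i : V) qnode S k i.

Definition heavy S k (i : V) : bool :=
  (#|V| - 1) * Delta S k <= #|V| * qnode S k i.

Definition weight S k (i : V) : nat :=
  if heavy S k i then qnode S k i * (2 - Un S k i) else qnode S k i.

Definition covered (M : {set {set V}}) (i : V) : bool := [exists l in M, i \in (l : {set V})].

Definition mweight S k (M : {set {set V}}) : nat :=
  \sum_(i | covered M i) weight S k i.

Definition NSB_run S : Prop :=
  forall k, admissible S k (S k) /\
            forall M, admissible S k M -> mweight S k M <= mweight S k (S k).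

(* All packets transmitted before slot k (i.e. within slots 0..k-1). *)
Definition evacuated S k : Prop := forall l, l \in E -> qlen S k l = 0.

End Net.

From mathcomp Require Import all_boot all_order zify boolp.
Set Implicit Arguments. Unset Strict Implicit. Unset Printing Implicit Defensive.

(* Within each frame of three slots NSB lowers the maximum workload Delta by
   two (while Delta >= 2), so it empties the network after about 3 Delta(0) / 2
   slots, whereas any schedule needs Delta(0) slots since a node sends at most
   one packet per slot.  The decrease rests on a property of maximum
   vertex-weighted matchings: a node of the largest possible weight 2 Delta is
   covered whenever the busy links between such nodes form a bipartite graph.
   Otherwise the alternating paths from an uncovered one, v, reach only nodes of
   weight 2 Delta, i.e. of workload Delta, and all their busy neighbours are
   matched back into this set minus v, which is too small to take all their
   packets.  The factor 2 - U_i(k) of heavy nodes makes the graph bipartite in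
   the second and third slot of each frame. *)

Section Cover.
Variable T : finType.
Implicit Types (A B : {set T}) (P Q : {set {set T}}).

Lemma disjointP A B : reflect (forall x, x \in A -> x \notin B) [disjoint A & B].
Proof.
rewrite disjoints_subset; apply: (iffP subsetP) => h x /h; first by rewrite inE.
by rewrite inE.
Qed.

Lemma coverU P Q : cover (P :|: Q) = cover P :|: cover Q.
Proof. exact: bigcup_setU. Qed.

Lemma cover0 : cover (set0 : {set {set T}}) = set0.
Proof. exact: big_set0. Qed.

Lemma cover_subset P Q : P \subset Q -> cover P \subset cover Q.
Proof.
move=> sPQ; apply/subsetP => x /bigcupP[A PA xA].
by apply/bigcupP; exists A => //; exact: (subsetP sPQ).
Qed.

Lemma mem_cover P A x : A \in P -> x \in A -> x \in cover P.
Proof. by move=> PA xA; apply/bigcupP; exists A. Qed.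

Lemma leq_sum_subset A B (F : T -> nat) :
  A \subset B -> \sum_(x in A) F x <= \sum_(x in B) F x.
Proof. by move/subsetP => sAB; apply: sub_le_big => // x y; rewrite leq_addr. Qed.

End Cover.

Section AlternatingPaths.
Variable V : finType.
Implicit Types (s x : V) (ps : seq (V * V)).

(* A path [s - u1 - y1 - u2 - y2 - ...] is the list of pairs [(u_i, y_i)];
   its cross links are [{s, u1}, {y1, u2}, ...], its pair links the [{u_i, y_i}]. *)
Definition path_verts ps : seq V := flatten [seq [:: p.1; p.2] | p <- ps].
Definition path_end s ps : V := last s [seq p.2 | p <- ps].
Fixpoint cross_links s ps : {set {set V}} :=
  if ps is (u, y) :: ps' then [set s; u] |: cross_links y ps' else set0.
Fixpoint pair_links ps : {set {set V}} :=
  if ps is (u, y) :: ps' then [set u; y] |: pair_links ps' else set0.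
Definition rev_path ps := rev [seq (p.2, p.1) | p <- ps].

Lemma path_verts_cons u y ps : path_verts ((u, y) :: ps) = u :: y :: path_verts ps.
Proof. by []. Qed.

Lemma path_verts_cat ps1 ps2 :
  path_verts (ps1 ++ ps2) = path_verts ps1 ++ path_verts ps2.
Proof. by rewrite /path_verts map_cat flatten_cat. Qed.

Lemma path_end_cons s u y ps : path_end s ((u, y) :: ps) = path_end y ps.
Proof. by []. Qed.

Lemma path_end_cat s ps1 ps2 :
  path_end s (ps1 ++ ps2) = path_end (path_end s ps1) ps2.
Proof. by rewrite /path_end map_cat last_cat. Qed.

Lemma path_end_in s ps : path_end s ps \in s :: path_verts ps.
Proof.
elim: ps s => [|[u y] ps IH] s; first exact: mem_head.
rewrite path_end_cons path_verts_cons.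
by move: (IH y); rewrite !in_cons => /orP[->|->]; rewrite ?orbT.
Qed.

Lemma cover_pair_links ps : cover (pair_links ps) = [set x | x \in path_verts ps].
Proof.
elim: ps => [|[u y] ps IH]; first by rewrite cover0; apply/setP => x; rewrite !inE.
rewrite coverU cover1 IH; apply/setP => x; rewrite !inE.
by rewrite -orbA.
Qed.

Lemma cover_cross_links s ps : uniq (s :: path_verts ps) ->
  cover (cross_links s ps) = [set x | x \in s :: path_verts ps] :\ path_end s ps.
Proof.
elim: ps s => [|[u y] ps IH] s /=.
  by move=> _; rewrite cover0; apply/setP => x; rewrite !inE; case: eqP.
rewrite path_verts_cons => /andP[hs /andP[hu /IH {}IH]].
rewrite coverU cover1 IH path_end_cons.
have hL := path_end_in y ps.
have Ls : path_end y ps != s by apply: contraNneq hs => <-; rewrite in_cons hL orbT.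
have Lu : path_end y ps != u by apply: contraNneq hu => <-.
apply/setP => x; rewrite !inE; case: (eqVneq x (path_end y ps)) => [->|_] /=.
  by rewrite (negbTE Ls) (negbTE Lu).
by rewrite !orbA.
Qed.

Lemma trivIset_cross_links s ps : uniq (s :: path_verts ps) ->
  trivIset (cross_links s ps).
Proof.
elim: ps s => [|[u y] ps IH] s /=; first by move=> _; apply/trivIsetP => ?; rewrite inE.
rewrite path_verts_cons => /and3P[hs hu hy].
rewrite setUC; apply: trivIsetU; [exact: IH | exact: trivIset1 |].
rewrite cover1 cover_cross_links //.
apply/disjointP => x /setD1P[_]; rewrite inE => hx; apply/set2P => -[] ex; subst x.
  by move: hs; rewrite in_cons hx orbT.
by rewrite hx in hu.
Qed.

Lemma path_verts_split x ps : x \in path_verts ps ->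
  exists ps1 u y ps2, ps = ps1 ++ (u, y) :: ps2 /\ (x = u \/ x = y).
Proof.
elim: ps => [|[u y] ps IH] //; rewrite path_verts_cons !in_cons.
case/predU1P => [->|/predU1P[->|/IH [ps1 [a [b [ps2 [-> h]]]]]]].
- by exists [::], u, y, ps; split; [|left].
- by exists [::], u, y, ps; split; [|right].
by exists ((u, y) :: ps1), a, b, ps2.
Qed.

Lemma rev_path_cons u y ps : rev_path ((u, y) :: ps) = rev_path ps ++ [:: (y, u)].
Proof. by rewrite /rev_path map_cons rev_cons cats1. Qed.

Lemma path_verts_rev ps : path_verts (rev_path ps) = rev (path_verts ps).
Proof.
elim: ps => [|[u y] ps IH] //.
by rewrite rev_path_cons path_verts_cat IH path_verts_cons /= !rev_cons -!cats1 -catA.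
Qed.

Lemma path_end_rev s u y ps : path_end s (rev_path ((u, y) :: ps)) = u.
Proof. by rewrite rev_path_cons path_end_cat. Qed.

End AlternatingPaths.

Section MaxWeightMatching.
Variables (V : finType) (L : {set {set V}}) (w : V -> nat) (W : nat).
Hypothesis L2 : forall l, l \in L -> #|l| = 2.
Hypothesis w_le : forall x, w x <= W.
Implicit Types (A B : {set {set V}}) (s u x y z : V) (ps : seq (V * V)).

Definition is_matching A := (A \subset L) && trivIset A.
Definition adj x y := [set x; y] \in L.
Definition cweight A := \sum_(x in cover A) w x.

Lemma adj_sym x y : adj x y = adj y x.
Proof. by rewrite /adj setUC. Qed.

Lemma adj_neq x y : adj x y -> x != y.
Proof. by move=> /L2; rewrite cards2; case: eqP. Qed.

Lemma link_other l x : l \in L -> x \in l -> exists2 y, x != y & l = [set x; y].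
Proof.
move=> /L2 /eqP /cards2P [a [b [hab ->]]]; case/set2P => ->; first by exists b.
by exists a; rewrite 1?eq_sym // setUC.
Qed.

Lemma is_matching_set1 l : l \in L -> is_matching [set l].
Proof. by move=> hl; rewrite /is_matching sub1set hl trivIset1. Qed.

Lemma is_matchingS A B : A \subset B -> is_matching B -> is_matching A.
Proof.
by move=> sAB /andP[sBL tB]; rewrite /is_matching (subset_trans sAB sBL) (trivIsetS sAB).
Qed.

Lemma is_matchingU A B : is_matching A -> is_matching B ->
  [disjoint cover A & cover B] -> is_matching (A :|: B).
Proof.
by move=> /andP[sAL tA] /andP[sBL tB] dAB; rewrite /is_matching subUset sAL sBL trivIsetU.
Qed.

Lemma matching_link_eq A l1 l2 x : is_matching A -> l1 \in A -> l2 \in A ->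
  x \in l1 -> x \in l2 -> l1 = l2.
Proof.
move=> /andP[_ /trivIsetP tA] h1 h2 x1 x2; apply: contraTeq isT => hne.
by move/disjointP: (tA _ _ h1 h2 hne) => /(_ x x1); rewrite x2.
Qed.

Variable M : {set {set V}}.
Hypothesis M_matching : is_matching M.
Hypothesis M_max : forall A, is_matching A -> cweight A <= cweight M.

Lemma sum_le_cweight A (X : {set V}) :
  is_matching A -> X \subset cover A -> \sum_(x in X) w x <= cweight M.
Proof. by move=> hA sX; apply: leq_trans (M_max hA); exact: leq_sum_subset. Qed.

(* Otherwise adding [l] to [M] would increase its weight. *)
Lemma max_matching_meets l : l \in L -> {in l, forall x, 0 < w x} ->
  exists2 x, x \in l & x \in cover M.
Proof.
move=> hl wl; move/eqP/cards2P: (L2 hl) => [a [b [_ el]]].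
have la : a \in l by rewrite el set21.
case: (boolP (a \in cover M)) => [ha|ha]; first by exists a.
case: (boolP (b \in cover M)) => [hb|hb]; first by exists b; rewrite // el set22.
have hN : is_matching (M :|: [set l]).
  apply: is_matchingU => //; first exact: is_matching_set1.
  rewrite cover1 el; apply/disjointP => x hx; apply/set2P => -[] ex.
    by rewrite -ex hx in ha.
  by rewrite -ex hx in hb.
have sub : a |: cover M \subset cover (M :|: [set l]).
  by rewrite coverU cover1 setUC setUS // sub1set.
have := sum_le_cweight hN sub.
by rewrite big_setU1 //= -[X in _ <= X]add0n leq_add2r leqNgt wl.
Qed.

Fixpoint alt s ps : bool :=
  if ps is (u, y) :: ps' then [&& adj s u, [set u; y] \in M & alt y ps'] else true.

Lemma alt_cat s ps1 ps2 : alt s (ps1 ++ ps2) = alt s ps1 && alt (path_end s ps1) ps2.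
Proof. by elim: ps1 s => [|[u y] ps1 IH] s //=; rewrite IH path_end_cons !andbA. Qed.

Lemma pair_links_sub s ps : alt s ps -> pair_links ps \subset M.
Proof.
elim: ps s => [|[u y] ps IH] s /=; first by rewrite sub0set.
by case/and3P=> _ hM /IH hps; rewrite subUset sub1set hM.
Qed.

Lemma cross_links_sub s ps : alt s ps -> cross_links s ps \subset L.
Proof.
elim: ps s => [|[u y] ps IH] s /=; first by rewrite sub0set.
by case/and3P=> hsu _ /IH hps; rewrite subUset sub1set hps andbT.
Qed.

Lemma adj_pair u y : [set u; y] \in M -> adj u y.
Proof. by move=> h; case/andP: M_matching => /subsetP /(_ _ h). Qed.

Lemma alt_rev_path u y ps x : alt y ps -> [set u; y] \in M ->
  adj x (path_end y ps) -> alt x (rev_path ((u, y) :: ps)).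
Proof.
elim: ps u y x => [|[u' y'] ps IH] u y x /=.
  by move=> _ huy hx; rewrite /rev_path /= hx setUC huy.
case/and3P=> hyu' hM' hps huy hx; rewrite rev_path_cons alt_cat (IH _ _ _ hps hM' hx).
by rewrite path_end_rev /= setUC huy adj_sym hyu'.
Qed.

Variable v : V.
Hypotheses (v_tight : w v = W) (W_gt0 : 0 < W) (v_free : v \notin cover M).

Lemma sum_cover_v : \sum_(x in v |: cover M) w x = W + cweight M.
Proof. by rewrite big_setU1 //= v_tight. Qed.

Lemma exchange_tight A z : is_matching A -> (v |: cover M) :\ z \subset cover A -> w z = W.
Proof.
move=> hA sub; apply/eqP; rewrite eqn_leq w_le -(leq_add2l (cweight M)) addnC.
set X := v |: cover M; have sXz : X \subset z |: (X :\ z).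
  by apply/subsetP => x hx; rewrite in_setU1 in_setD1 hx andbT; case: eqP.
rewrite -sum_cover_v (leq_trans (leq_sum_subset _ sXz)) // big_setU1 ?setD11 //=.
by rewrite addnC leq_add2r (sum_le_cweight hA).
Qed.

Lemma no_augmenting A : is_matching A -> ~~ (v |: cover M \subset cover A).
Proof.
move=> hA; apply/negP => /(sum_le_cweight hA).
by rewrite sum_cover_v -[X in _ <= X]add0n leq_add2r leqNgt W_gt0.
Qed.

Definition simple ps := alt v ps && uniq (v :: path_verts ps).

Lemma simple_prefix ps1 ps2 : simple (ps1 ++ ps2) -> simple ps1.
Proof.
by rewrite /simple alt_cat path_verts_cat -cat_cons cat_uniq => /andP[/andP[-> _] /andP[]].
Qed.

Lemma path_verts_covered ps x : simple ps -> x \in path_verts ps -> x \in cover M.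
Proof.
move=> /andP[hps _] hx; apply: (subsetP (cover_subset (pair_links_sub hps))).
by rewrite cover_pair_links inE.
Qed.

Lemma matched_on_path ps l x : simple ps -> l \in M -> x \in l ->
  x \in v :: path_verts ps -> l \in pair_links ps.
Proof.
move=> hps hl hx; rewrite in_cons => /predU1P[exv|hxp].
  by move: v_free; rewrite -exv (mem_cover hl hx).
move: hxp; rewrite -[_ \in _](inE _) -cover_pair_links => /bigcupP[l' hl' hx'].
case/andP: hps => /pair_links_sub /subsetP /(_ _ hl') hl'M _.
by rewrite (matching_link_eq M_matching hl hl'M hx hx').
Qed.

Lemma cover_setD_pair_links ps : simple ps ->
  cover (M :\: pair_links ps) = cover M :\: [set x | x \in v :: path_verts ps].
Proof.
move=> hps; apply/setP => x; rewrite [in RHS]inE; apply/bigcupP/andP.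
  case=> l /setDP[hlM hlp] hx; split; last exact: mem_cover hx.
  by rewrite inE; apply: contra hlp; exact: matched_on_path.
case=> hxp /bigcupP[l hl hx]; exists l => //; rewrite inE hl andbT.
apply: contra hxp => hlp; have := mem_cover hlp hx.
by rewrite cover_pair_links !inE => ->; rewrite orbT.
Qed.

Definition switch ps := (M :\: pair_links ps) :|: cross_links v ps.

Lemma is_matching_switch ps : simple ps -> is_matching (switch ps).
Proof.
move=> hps; have /andP[halt hun] := hps; apply: is_matchingU.
- exact: is_matchingS (subsetDl _ _) M_matching.
- by rewrite /is_matching cross_links_sub // trivIset_cross_links.
rewrite cover_setD_pair_links // cover_cross_links //.
by apply/disjointP => x /setDP[_ hx]; rewrite in_setD1 negb_and hx orbT.
Qed.

Lemma cover_switch ps : simple ps -> cover (switch ps) = (v |: cover M) :\ path_end v ps.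
Proof.
move=> hps; have /andP[_ hun] := hps.
rewrite coverU cover_setD_pair_links // cover_cross_links //.
have hL := path_end_in v ps; rewrite in_cons in hL.
apply/setP => x; rewrite !inE; case hxp: ((x == v) || (x \in path_verts ps)) => /=.
  by case/orP: hxp => [/eqP->|/(path_verts_covered hps)->]; rewrite ?eqxx ?orbT ?andbT.
have hxL : x != path_end v ps by apply: contraFneq hxp => ->.
by move: hxp; move/negbT; rewrite negb_or => /andP[/negbTE -> _]; rewrite hxL orbF.
Qed.

Definition reachable z := exists2 ps, simple ps & path_end v ps = z.

(* Switching along a path is a matching that trades its end for [v]. *)
Lemma reachable_tight z : reachable z -> w z = W.
Proof.
case=> ps hps <-; apply: (exchange_tight (is_matching_switch hps)).
by rewrite cover_switch.
Qed.

Variable col : V -> bool.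
Hypothesis col_proper :
  forall x y, w x = W -> w y = W -> adj x y -> col x != col y.

Lemma col_path_end s ps : alt s ps -> {in s :: path_verts ps, forall x, w x = W} ->
  col (path_end s ps) = col s.
Proof.
elim: ps s => [|[u y] ps IH] s //= /and3P[hsu huy hps] tight.
rewrite path_end_cons IH //; last first.
  by move=> x hx; apply: tight; rewrite path_verts_cons in_cons in_cons hx !orbT.
have [ws wu wy] : [/\ w s = W, w u = W & w y = W].
  by split; apply: tight; rewrite path_verts_cons !in_cons eqxx ?orbT.
have := col_proper ws wu hsu; have := col_proper wu wy (adj_pair huy).
by case: (col s); case: (col u); case: (col y).
Qed.

Lemma uniq_cut_rev (T : eqType) (x : T) (p q r : seq T) :
  uniq (x :: p ++ q ++ r) -> uniq (x :: p ++ rev r).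
Proof.
move=> h; have : uniq ((x :: p) ++ r).
  by apply: subseq_uniq h; rewrite -cat_cons cat_subseq // suffix_subseq.
by rewrite -cat_cons !cat_uniq rev_uniq has_rev.
Qed.

(* An odd cycle closing an alternating path can be travelled both ways, so
   all its vertices are reachable, hence tight, hence properly coloured. *)
Lemma no_odd_cycle pre seg : simple (pre ++ seg) -> seg != [::] ->
  ~ adj (path_end v (pre ++ seg)) (path_end v pre).
Proof.
move=> hps hseg hch; have /andP[halt hun] := hps.
move: (halt); rewrite alt_cat => /andP[hpre hseg_alt].
set y0 := path_end v pre in hch hseg_alt.
have reach_seg x : x \in path_verts seg -> reachable x.
  case/path_verts_split => [s1 [a [b [s2 [eseg hx]]]]].
  move: hseg_alt; rewrite eseg alt_cat => /andP[_ /and3P[_ hab hs2]].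
  case: hx => ->.
  - exists (pre ++ rev_path ((a, b) :: s2)); last by rewrite path_end_cat path_end_rev.
    rewrite /simple alt_cat hpre alt_rev_path //=; last first.
      by move: hch; rewrite path_end_cat eseg path_end_cat /= adj_sym.
    move: hun; rewrite !path_verts_cat path_verts_rev eseg path_verts_cat path_verts_cons.
    exact: uniq_cut_rev.
  - exists (pre ++ s1 ++ [:: (a, b)]); last by rewrite !path_end_cat.
    by apply: (@simple_prefix _ s2); rewrite -!catA /= -eseg.
have tight_end : w (path_end v (pre ++ seg)) = W by apply: reachable_tight; exists (pre ++ seg).
have tight_y0 : w y0 = W by apply: reachable_tight; exists pre; first exact: simple_prefix hps.
have := col_proper tight_end tight_y0 hch.
rewrite path_end_cat col_path_end ?eqxx // => x; rewrite in_cons => /predU1P[-> //|hx].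
exact: reachable_tight (reach_seg x hx).
Qed.

Lemma neighbour_on_path ps u : simple ps -> adj (path_end v ps) u ->
  u \in v :: path_verts ps -> exists2 t, reachable t & [set u; t] \in M.
Proof.
move=> hps hzu; have hne := adj_neq hzu.
rewrite in_cons => /predU1P[euv|].
  exfalso; apply: (@no_odd_cycle [::] ps) => //; last by move: hzu; rewrite euv.
  by apply: contra_neq hne => eps; rewrite euv eps.
case/path_verts_split => [p1 [a [b [p2 [eps [eua|eub]]]]]]; subst u.
  have hab : [set a; b] \in M.
    by case/andP: hps; rewrite eps alt_cat => /andP[_ /and3P[]].
  exists b => //; exists (p1 ++ [:: (a, b)]); last by rewrite path_end_cat.
  by apply: (@simple_prefix _ p2); rewrite -catA /= -eps.
exfalso; apply: (@no_odd_cycle (p1 ++ [:: (a, b)]) p2).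
- by rewrite -catA /= -eps.
- by apply: contra_neq hne => ep2; rewrite eps ep2 path_end_cat.
- by rewrite -catA /= -eps path_end_cat.
Qed.

Lemma neighbour_covered ps u : simple ps -> adj (path_end v ps) u ->
  u \notin v :: path_verts ps -> u \in cover M.
Proof.
move=> hps hzu hu; apply: contraT => hc; set z := path_end v ps in hzu.
have huv : u != v by apply: contra hu => /eqP->; exact: mem_head.
have hd : [disjoint cover (switch ps) & cover [set [set z; u]]].
  rewrite cover_switch // cover1; apply/disjointP => x /setD1P[hxz hx].
  rewrite !inE negb_or hxz /=; apply: contraNneq hc => exu.
  by move: hx; rewrite exu in_setU1 (negPf huv).
have hN := is_matchingU (is_matching_switch hps) (is_matching_set1 hzu) hd.
exfalso; apply: (negP (no_augmenting hN)); apply/subsetP => x hx.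
by rewrite coverU cover_switch // cover1 in_setU in_setD1 hx andbT in_set2; case: (x == z).
Qed.

Lemma neighbour_off_path ps u : simple ps -> adj (path_end v ps) u ->
  u \notin v :: path_verts ps -> exists2 t, reachable t & [set u; t] \in M.
Proof.
move=> hps hzu hu; have /andP[halt hun] := hps.
case/bigcupP: (neighbour_covered hps hzu hu) => l hl hul.
have [t hut el] := link_other (subsetP (proj1 (andP M_matching)) _ hl) hul.
have htl : t \in l by rewrite el set22.
have ht : t \notin v :: path_verts ps.
  apply: contra hu => ht; have := mem_cover (matched_on_path hps hl htl ht) hul.
  by rewrite cover_pair_links inE in_cons => ->; rewrite orbT.
exists t; last by rewrite -el.
exists (ps ++ [:: (u, t)]); last by rewrite path_end_cat.
have hun' : uniq (v :: path_verts (ps ++ [:: (u, t)])).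
  rewrite path_verts_cat -cat_cons cat_uniq hun /= andbT.
  by rewrite mem_seq1 hut orbF andbT negb_or hu.
by rewrite /simple alt_cat halt hun' /= hzu -el hl.
Qed.

Lemma reachable_neighbour z u : reachable z -> adj z u ->
  exists2 t, reachable t & [set u; t] \in M.
Proof.
case=> ps hps <- hzu; have [hu|hu] := boolP (u \in v :: path_verts ps).
  exact: neighbour_on_path hu.
exact: neighbour_off_path hu.
Qed.

(* The reachable vertices are tight and have fewer neighbours than
   themselves: every neighbour is matched to a reachable vertex other than [v]. *)
Lemma tight_hall_violator : exists O N : {set V},
  [/\ {in O, forall z, w z = W}, #|N| < #|O| & forall z u, z \in O -> adj z u -> u \in N].
Proof.
pose O := [set z | `[< reachable z >]].
have inO z : reflect (reachable z) (z \in O) by rewrite inE; exact: asboolP.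
pose N := [set u | [exists t in O, [set u; t] \in M]].
pose mate u := odflt u [pick t in O | [set u; t] \in M].
have mateP u : u \in N -> (mate u \in O) && ([set u; mate u] \in M).
  rewrite inE => /existsP[t ht]; rewrite /mate.
  by case: pickP => [t' -> //|/(_ t)]; rewrite ht.
exists O, N; split.
- by move=> z /inO; exact: reachable_tight.
- have vO : v \in O by apply/inO; exists [::].
  rewrite (cardsD1 v O) vO add1n ltnS -(card_in_imset (f := mate)); last first.
    move=> u1 u2 /mateP/andP[_ m1] /mateP/andP[_ m2] e; rewrite e in m1.
    have := matching_link_eq M_matching m1 m2 (set22 _ _) (set22 _ _).
    move/setP/(_ u1); rewrite set21 => /esym/set2P[] // e1.
    by have := adj_neq (adj_pair m1); rewrite e1 eqxx.
  apply/subset_leq_card/subsetP => _ /imsetP[u hu ->].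
  have /andP[hO hM] := mateP u hu; rewrite in_setD1 hO andbT.
  by apply: contraNneq v_free => <-; exact: mem_cover hM (set22 _ _).
- move=> z u /inO hz /(reachable_neighbour hz) [t ht htM].
  by rewrite inE; apply/existsP; exists t; rewrite htM andbT; apply/inO.
Qed.

End MaxWeightMatching.

Section Schedules.
Variables (V : finType) (E : {set {set V}}) (Q0 : {set V} -> nat).
Hypothesis E2 : forall l, l \in E -> #|l| = 2.
Variable S : nat -> {set {set V}}.
Local Notation q := (qlen Q0 S).
Local Notation Qn := (qnode E Q0 S).
Local Notation Delta := (Delta E Q0 S).
Implicit Types (i x : V) (l : {set V}).

Lemma covered_cover (A : {set {set V}}) x : covered A x = (x \in cover A).
Proof. by apply/existsP/bigcupP => [[l /andP[]]|[l hl hx]]; [exists l | exists l; rewrite hl]. Qed.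

Lemma qlen_leS k l : q k.+1 l <= q k l.
Proof. exact: leq_subr. Qed.

Lemma qnode_leS k i : Qn k.+1 i <= Qn k i.
Proof. by apply: leq_sum => l _; exact: qlen_leS. Qed.

Lemma qlen_le_qnode k i l : l \in E -> i \in l -> q k l <= Qn k i.
Proof. by move=> hl hi; rewrite /qnode (bigD1 l) ?hl ?hi //= leq_addr. Qed.

Lemma qlen2_le_qnode k i l l' : l \in E -> l' \in E -> i \in l -> i \in l' -> l != l' ->
  q k l + q k l' <= Qn k i.
Proof.
move=> hl hl' hi hi' hne; rewrite /qnode (bigD1 l) ?hl ?hi //= leq_add2l.
by rewrite (bigD1 l') ?hl' ?hi' 1?eq_sym ?hne //= leq_addr.
Qed.

Lemma qnode_le_Delta k i : Qn k i <= Delta k.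
Proof. exact: (@leq_bigmax V (Qn k) i). Qed.

Lemma Delta_leP k n : reflect (forall i, Qn k i <= n) (Delta k <= n).
Proof.
apply: (iffP idP) => [hD i | h]; first exact: leq_trans (qnode_le_Delta k i) hD.
by apply/bigmax_leqP => i _; exact: h.
Qed.

Lemma Delta_leS k : Delta k.+1 <= Delta k.
Proof. by apply/Delta_leP => i; exact: leq_trans (qnode_leS k i) (qnode_le_Delta k i). Qed.

Lemma Delta_le j k : j <= k -> Delta k <= Delta j.
Proof.
apply: (homo_leq (r := fun a b => b <= a)) => [a | b a c hba hcb | i].
- exact: leqnn.
- exact: leq_trans hcb hba.
- exact: Delta_leS.
Qed.

Lemma Delta_eq0_evacuated k : Delta k = 0 -> evacuated E Q0 S k.
Proof.
move=> D0 l hl; move/eqP/cards2P: (E2 hl) => [a [b [_ el]]].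
have ha : a \in l by rewrite el set21.
by apply/eqP; rewrite -leqn0 -D0 (leq_trans (qlen_le_qnode k hl ha)) ?qnode_le_Delta.
Qed.

Lemma qnode_uncovered k i : i \notin cover (S k) -> Qn k.+1 i = Qn k i.
Proof.
move=> hi; apply: eq_bigr => l /andP[_ il] /=.
by case hl: (l \in S k); [rewrite (mem_cover hl il) in hi | rewrite subn0].
Qed.

Lemma qnode_covered k i : admissible E Q0 S k (S k) -> i \in cover (S k) ->
  Qn k.+1 i < Qn k i.
Proof.
move=> [[sSE _] hq] /bigcupP[l hl il]; have hlE := subsetP sSE _ hl.
rewrite /qnode (bigD1 l) ?hlE ?il //= [X in _ < X](bigD1 l) ?hlE ?il //=.
rewrite -addSn leq_add ?hl ?subn1 ?prednK ?hq //.
by apply: leq_sum => l' _; exact: qlen_leS.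
Qed.

Lemma matching_incident_le1 (M : {set {set V}}) i : matching E M ->
  \sum_(l in E | i \in l) (l \in M : nat) <= 1.
Proof.
case=> sME hdisj; have [/bigcupP[l0 h0 i0]|hi] := boolP (i \in cover M).
  rewrite (bigD1 l0) ?(subsetP sME _ h0) ?i0 //= h0 big1 // => l /andP[/andP[_ il] hne].
  apply/eqP; rewrite eqb0; apply/negP => hl.
  by move/disjointP: (hdisj _ _ hl h0 hne) => /(_ i il); rewrite i0.
rewrite big1 // => l /andP[_ il]; apply/eqP; rewrite eqb0.
by apply: contra hi => hl; exact: mem_cover hl il.
Qed.

Lemma qnode_le_addS1 k i : admissible E Q0 S k (S k) -> Qn k i <= Qn k.+1 i + 1.
Proof.
case=> hM _; apply: leq_trans (leq_add (leqnn _) (matching_incident_le1 i hM)).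
rewrite /qnode -big_split; apply: leq_sum => l _ /=.
by rewrite addnC -leq_subLR.
Qed.

Lemma Delta0_le_evacuation t : feasible E Q0 S -> evacuated E Q0 S t -> Delta 0 <= t.
Proof.
move=> hS hev; apply/Delta_leP => i.
have drop k : Qn 0 i <= Qn k i + k.
  elim: k => [|k IH]; first by rewrite addn0.
  by have := qnode_le_addS1 i (hS k); lia.
have Qt : Qn t i = 0 by rewrite /qnode big1 // => l /andP[hl _]; exact: hev.
by have := drop t; rewrite Qt.
Qed.

Lemma sum_mem2 (A : {set V}) a b : a != b ->
  \sum_(z in A) (z \in [set a; b] : nat) = (a \in A) + (b \in A).
Proof.
move=> hab; rewrite (_ : \sum_(z in A) _ = \sum_(z in [set a; b]) (z \in A : nat)).
  by rewrite big_setU1 ?big_set1 ?inE.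
by rewrite big_mkcond [RHS]big_mkcond; apply: eq_bigr => z _; do 2!case: (_ \in _).
Qed.

(* Each busy link is counted at least as often at [N] as at [O]. *)
Lemma sum_qnode_le k (O N : {set V}) :
  (forall z u, z \in O -> [set z; u] \in E -> 0 < q k [set z; u] -> u \in N) ->
  \sum_(z in O) Qn k z <= \sum_(u in N) Qn k u.
Proof.
move=> hON; have QnE z : Qn k z = \sum_(l in E) (z \in l) * q k l.
  by rewrite /qnode big_mkcondr; apply: eq_bigr => l _; case: (z \in l); rewrite ?mul1n.
rewrite (eq_bigr _ (fun z _ => QnE z)) [X in _ <= X](eq_bigr _ (fun z _ => QnE z)).
rewrite exchange_big [X in _ <= X]exchange_big /=; apply: leq_sum => l hl.
rewrite -!big_distrl /= leq_mul2r; have [//|hq] := posnP (q k l).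
move/eqP/cards2P: (E2 hl) => [a [b [hab el]]]; rewrite el !sum_mem2 //.
have ab : a \in O -> b \in N by move=> ha; apply: hON ha _ _; rewrite -el.
have ba : b \in O -> a \in N by move=> hb; apply: hON hb _ _; rewrite setUC -el.
move: ab ba; case: (a \in O); case: (b \in O); case: (a \in N); case: (b \in N) => //= h1 h2.
all: by [move: (h1 isT) | move: (h2 isT)].
Qed.

Section NSB.
Hypothesis HS : NSB_run E Q0 S.
Local Notation w := (weight E Q0 S).

Definition busy k : {set {set V}} := [set l in E | 0 < q k l].

Lemma busy2 k l : l \in busy k -> #|l| = 2.
Proof. by rewrite inE => /andP[/E2]. Qed.

Lemma admissibleE k A : admissible E Q0 S k A <-> is_matching (busy k) A.
Proof.
split=> [[[sAE hdisj] hq] | /andP[sAL /trivIsetP tA]].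
  apply/andP; split; last by apply/trivIsetP => l1 l2 h1 h2; exact: hdisj.
  by apply/subsetP => l hl; rewrite inE (subsetP sAE _ hl) hq.
split; last by move=> l /(subsetP sAL); rewrite inE => /andP[].
split; last by move=> l1 l2; exact: tA.
by apply/subsetP => l /(subsetP sAL); rewrite inE => /andP[].
Qed.

Lemma NSB_admissible k : admissible E Q0 S k (S k).
Proof. by case: (HS k). Qed.

Lemma NSB_is_matching k : is_matching (busy k) (S k).
Proof. exact/admissibleE/NSB_admissible. Qed.

Lemma NSB_max k A : is_matching (busy k) A -> cweight (w k) A <= cweight (w k) (S k).
Proof.
have mwE B : mweight E Q0 S k B = cweight (w k) B.
  by apply: eq_bigl => x; rewrite covered_cover.
by move/admissibleE => hA; rewrite -!mwE; case: (HS k) => _; exact.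
Qed.

Lemma Un_le1 k x : Un S k x <= 1.
Proof.
have R1 d : Rback S k d x <= 1 by rewrite /Rback; case: ifP => _; rewrite ?leq_b1.
by rewrite /Un; case: ifP => _; rewrite ?(leq_trans (leq_mul (R1 1) (R1 2))).
Qed.

Lemma qnode_le_weight k x : Qn k x <= w k x.
Proof.
rewrite /weight; case: ifP => // _; apply: leq_pmulr.
by rewrite subn_gt0 (leq_ltn_trans (Un_le1 k x)).
Qed.

Lemma weight_le k x : w k x <= 2 * Delta k.
Proof.
apply: leq_trans (_ : 2 * Qn k x <= _); last by rewrite leq_mul2l qnode_le_Delta orbT.
rewrite /weight; case: ifP => _; last by rewrite leq_pmull.
by rewrite mulnC leq_mul2r leq_subr orbT.
Qed.

Lemma weight_maxE k x : 0 < Delta k ->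
  (w k x == 2 * Delta k) = (Un S k x == 0) && (Qn k x == Delta k).
Proof.
move=> D_gt0; have QD := qnode_le_Delta k x.
have lt2D : Qn k x != 2 * Delta k by rewrite neq_ltn (leq_ltn_trans QD) ?ltn_Pmull.
rewrite /weight; case: ifP => hv.
  have := Un_le1 k x; case: (Un S k x) => [|[|//]] _ /=.
    by rewrite subn0 mulnC eqn_pmul2l.
  by rewrite muln1 (negPf lt2D).
rewrite (negPf lt2D) andbC; apply/esym/negbTE; apply: contraFN hv => /andP[/eqP QxD _].
by rewrite /heavy QxD leq_mul2r leq_subr orbT.
Qed.

Lemma NSB_maximal k l : l \in E -> 0 < q k l -> exists2 x, x \in l & x \in cover (S k).
Proof.
move=> hl hq; have hlb : l \in busy k by rewrite inE hl.
apply: (max_matching_meets (@busy2 k) (NSB_is_matching k) (@NSB_max k) hlb) => x hx.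
exact: leq_trans hq (leq_trans (qlen_le_qnode k hl hx) (qnode_le_weight k x)).
Qed.

Lemma NSB_covers_tight k (col : V -> bool) :
  (forall x y, w k x = 2 * Delta k -> w k y = 2 * Delta k -> [set x; y] \in busy k ->
    col x != col y) ->
  0 < Delta k -> forall x, w k x = 2 * Delta k -> x \in cover (S k).
Proof.
move=> col_proper D_gt0 v v_tight; apply: contraT => v_free.
have [|O [N [O_tight ltNO ON]]] := tight_hall_violator (@busy2 k) (@weight_le k)
  (NSB_is_matching k) (@NSB_max k) v_tight _ v_free col_proper.
  by rewrite muln_gt0.
have QO z : z \in O -> Qn k z = Delta k.
  by move=> /O_tight /eqP; rewrite weight_maxE // => /andP[_ /eqP].
have sumON : \sum_(z in O) Qn k z <= \sum_(u in N) Qn k u.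
  by apply: sum_qnode_le => z u hz hE hq; apply: ON hz _; rewrite /adj inE hE.
have sumN : \sum_(u in N) Qn k u <= #|N| * Delta k.
  by rewrite -sum_nat_const; apply: leq_sum => u _; exact: qnode_le_Delta.
move: (leq_trans sumON sumN); rewrite (eq_bigr _ QO) sum_nat_const leq_pmul2r //.
by rewrite leqNgt ltNO.
Qed.

Lemma NSB_qnode_covered k x : x \in cover (S k) -> Qn k.+1 x < Qn k x.
Proof. exact/qnode_covered/NSB_admissible. Qed.

Lemma Delta_le1_clears k : Delta k <= 1 -> Delta k.+1 = 0.
Proof.
move=> D_le1; have empty l : l \in E -> q k.+1 l = 0.
  move=> hl; have [q0|q_gt0] := posnP (q k l).
    by apply/eqP; rewrite -leqn0 -q0 qlen_leS.
  have [x hx /bigcupP[l' hl' hx']] := NSB_maximal hl q_gt0.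
  have Qx1 := leq_trans (qnode_le_Delta k x) D_le1.
  have [[sSE _] hq'] := NSB_admissible k; have hl'E := subsetP sSE _ hl'.
  have [el|hne] := eqVneq l' l.
    subst l'; apply/eqP; rewrite /= hl' subn_eq0.
    exact: leq_trans (qlen_le_qnode k hl hx) Qx1.
  have hll' : l != l' by rewrite eq_sym.
  have Q2 := qlen2_le_qnode k hl hl'E hx hx' hll'.
  by have := leq_trans (leq_add q_gt0 (hq' _ hl')) (leq_trans Q2 Qx1).
apply/eqP; rewrite -leqn0; apply/Delta_leP => i.
by rewrite /qnode big1 // => l /andP[hl _]; exact: empty.
Qed.

Lemma Un_frame1 m x : Un S (3 * m).+1 x = (x \in cover (S (3 * m))).
Proof.
rewrite /Un; have -> : (3 * m).+1 %% 3 = 1 by rewrite -addn1 mulnC modnMDl.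
by rewrite /Rback /= subn1 /= /Rn -covered_cover.
Qed.

Lemma Un_frame2 m x :
  Un S (3 * m).+2 x = (x \in cover (S (3 * m).+1)) * (x \in cover (S (3 * m))).
Proof.
rewrite /Un; have -> : (3 * m).+2 %% 3 = 2 by rewrite -addn2 mulnC modnMDl.
by rewrite /Rback /= subn1 subn2 /= /Rn -!covered_cover.
Qed.

Lemma tight_frame1_not_busy m x y : 0 < Delta (3 * m).+1 ->
  w (3 * m).+1 x = 2 * Delta (3 * m).+1 -> w (3 * m).+1 y = 2 * Delta (3 * m).+1 ->
  [set x; y] \notin busy (3 * m).+1.
Proof.
move=> D_gt0 /eqP + /eqP; rewrite !weight_maxE // !Un_frame1 !eqb0.
move=> /andP[hx _] /andP[hy _]; rewrite inE; apply/negP => /andP[hE hq].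
have [z /set2P[]-> hz] := NSB_maximal hE (leq_trans hq (qlen_leS _ _)).
  by rewrite hz in hx.
by rewrite hz in hy.
Qed.

Lemma tight_frame2_coloured m : 0 < Delta (3 * m).+2 -> forall x y,
  w (3 * m).+2 x = 2 * Delta (3 * m).+2 -> w (3 * m).+2 y = 2 * Delta (3 * m).+2 ->
  [set x; y] \in busy (3 * m).+2 ->
  (x \in cover (S (3 * m))) != (y \in cover (S (3 * m))).
Proof.
move=> D_gt0 x y /eqP + /eqP; rewrite !weight_maxE // !Un_frame2 !muln_eq0 !eqb0.
move=> /andP[ux _] /andP[uy _]; rewrite inE => /andP[hE hq2].
have hq1 := leq_trans hq2 (qlen_leS _ _); have hq0 := leq_trans hq1 (qlen_leS _ _).
case cx: (x \in cover _); case cy: (y \in cover _) => //.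
  rewrite cx orbF in ux; rewrite cy orbF in uy.
  have [z /set2P[]-> hz] := NSB_maximal hE hq1; first by rewrite hz in ux.
  by rewrite hz in uy.
have [z /set2P[]-> hz] := NSB_maximal hE hq0; first by rewrite hz in cx.
by rewrite hz in cy.
Qed.

(* A node of maximal workload that NSB skips in the first slot of a frame is
   tight in the second, where tight nodes share no busy link. *)
Lemma qnode_frame_lt m x : 0 < Delta (3 * m) -> Qn (3 * m).+2 x < Delta (3 * m).
Proof.
set a := 3 * m; set D := Delta a => D_gt0.
have max_served y : Qn a y = D -> (y \in cover (S a)) || (y \in cover (S a.+1)).
  move=> QyD; case ca: (y \in cover (S a)) => //=.
  have Q1 : Qn a.+1 y = D by rewrite qnode_uncovered ?ca.
  have D1 : Delta a.+1 = D.
    by apply/eqP; rewrite eqn_leq Delta_leS -{1}Q1 qnode_le_Delta.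
  have D1_gt0 : 0 < Delta a.+1 by rewrite D1.
  apply: (@NSB_covers_tight _ (fun _ => true)) => //.
    by move=> z t tz tt hb; have := tight_frame1_not_busy D1_gt0 tz tt; rewrite hb.
  by apply/eqP; rewrite weight_maxE // Un_frame1 ca Q1 D1 !eqxx.
have Q21 := qnode_leS a.+1 x; have Q10 := qnode_leS a x.
have [ltD|geD] := ltnP (Qn a x) D; first exact: leq_ltn_trans (leq_trans Q21 Q10) ltD.
have QxD : Qn a x = D by apply/eqP; rewrite eqn_leq qnode_le_Delta geD.
rewrite -QxD; case/orP: (max_served x QxD) => /NSB_qnode_covered lt.
  exact: leq_ltn_trans Q21 lt.
exact: leq_trans lt Q10.
Qed.

(* Nodes still at the top after two slots were served at most once, hence are
   tight in the third slot; their busy links join nodes served differently in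
   the first slot. *)
Lemma Delta_frame m : Delta (3 * m).+3 <= Delta (3 * m) - 2.
Proof.
set a := 3 * m; set D := Delta a.
have [D_le1|D_gt1] := leqP D 1.
  have le31 : Delta a.+3 <= Delta a.+1 by apply: Delta_le; rewrite !ltnS leqW.
  by rewrite (Delta_le1_clears D_le1) leqn0 in le31; rewrite (eqP le31).
have Q2_lt x : Qn a.+2 x < D := @qnode_frame_lt m x (ltnW D_gt1).
apply/Delta_leP => x; have Q32 := qnode_leS a.+2 x.
have [lt|ge] := ltnP (Qn a.+2 x) (D - 1); first by move: Q32 lt; lia.
have Q2 : Qn a.+2 x = D - 1 by move: (Q2_lt x) ge; lia.
have D2 : Delta a.+2 = D - 1.
  apply/eqP; rewrite eqn_leq -{2}Q2 qnode_le_Delta andbT.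
  by apply/Delta_leP => y; move: (Q2_lt y); lia.
have D2_gt0 : 0 < Delta a.+2 by rewrite D2 subn_gt0.
have U2 : Un S a.+2 x = 0.
  rewrite Un_frame2; apply/eqP; rewrite muln_eq0 !eqb0 -negb_and; apply/negP.
  case/andP => /NSB_qnode_covered c1 /NSB_qnode_covered c0.
  by move: c1 c0 (qnode_le_Delta a x) ge; rewrite -/a -/D; lia.
have tx : w a.+2 x = 2 * Delta a.+2 by apply/eqP; rewrite weight_maxE // U2 Q2 D2 !eqxx.
have := NSB_qnode_covered (NSB_covers_tight (tight_frame2_coloured D2_gt0) D2_gt0 tx).
by rewrite -/a; move: Q2; lia.
Qed.

End NSB.

End Schedules.

Unset Implicit Arguments.

Theorem theorem1 (V : finType) (E : {set {set V}}) (Q0 : {set V} -> nat) :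
  (forall l, l \in E -> #|l| = 2) ->
  (forall l, l \notin E -> Q0 l = 0) ->
  forall S : nat -> {set {set V}}, NSB_run E Q0 S ->
  forall (S' : nat -> {set {set V}}) (t' : nat),
    feasible E Q0 S' -> evacuated E Q0 S' t' ->
    exists T : nat, evacuated E Q0 S T /\ 2 * T <= 3 * t'.
Proof.
move=> E2 _ S HS S' t' HS' Hev.
set D0 := Delta E Q0 S 0.
have D0_le : D0 <= t' := Delta0_le_evacuation HS' Hev.
have frames m : Delta E Q0 S (3 * m) <= D0 - 2 * m.
  elim: m => [|m IH]; first by rewrite muln0 subn0.
  have -> : 3 * m.+1 = (3 * m).+3 by rewrite mulnS.
  by move: (Delta_frame E2 HS m) IH; lia.
have D0E := odd_double_half D0; rewrite -muln2 in D0E.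
exists (3 * D0./2 + odd D0); split; last by move: D0E D0_le; lia.
apply: (Delta_eq0_evacuated E2); have := frames D0./2.
case: (odd D0) D0E => D0E le; rewrite ?addn1 ?addn0.
  by apply: (Delta_le1_clears E2 HS); move: le; lia.
by move: le; lia.
Qed.
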